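(* Let $\mathsf{X}\in\{\mathsf{F},\mathsf{V}\}$. If $K\subseteq\Sigma^*$ is $\leftarrow$-reducible to $L\subseteq\Gamma^*$ via a Mealy machine with $d$ states, then $X_K(n) \le 2d\cdot X_L(n)$ for all $n$. In particular, for any function $s(n)$ the classes $\mathsf{F}(\mathcal{O}(s))$ and $\mathsf{V}(\mathcal{O}(s))$ are closed under $\leftarrow$-reductions.
   Context: A Mealy machine $(Q,\Sigma,\Gamma,q_0,\delta)$ with finite $Q$ and $\delta\colon Q\times\Sigma\to Q\times\Gamma$ defines $\tau_q$ by $\tau_q(\varepsilon)=\varepsilon$, $\tau_p(bu)=c\,\tau_q(u)$ if $\delta(p,b)=(q,c)$; it computes the $\leftarrow$-transduction $x\mapsto\tau_{q_0}(x^\mathsf{R})^\mathsf{R}$ ($^\mathsf{R}$ = word reversal). This is a $\leftarrow$-reduction from $K$ to $L$ if $x\in K\iff\tau(x)\in L$ for all $x\in\Sigma^*$. A streaming algorithm is a deterministic (possibly infinite-state) automaton with an injective encoding $\mathrm{enc}$ of states into bit strings. Fixed-size: fix a padding symbol in the alphabet; $\mathrm{last}_n(w)$ is the last $n$ symbols of $w$, left-padded with the padding symbol if $|w|<n$; a fixed-size algorithm for $L$ is $(\mathcal{A}_n)$ with $\mathcal{A}_n$ accepting $\{w:\mathrm{last}_n(w)\in L\}$, with space at $n$ the maximal encoding length of a state of $\mathcal{A}_n$; $F_L(n)$ is the minimum over all such algorithms. Variable-size: over alphabet $\cup\{\downarrow\}$, $\mathrm{wnd}(\varepsilon)=\varepsilon$,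 $\mathrm{wnd}(ub)=\mathrm{wnd}(u)b$, $\mathrm{wnd}(u\!\downarrow)=\varepsilon$ if $\mathrm{wnd}(u)=\varepsilon$, $\mathrm{wnd}(u\!\downarrow)=v$ if $\mathrm{wnd}(u)=bv$; an algorithm accepts $\{w:\mathrm{wnd}(w)\in L\}$ with space $v_\mathcal{A}(n)=\max\{|\mathrm{enc}(\mathcal{A}(u'))|:u'\text{ prefix of }u,\ |\mathrm{wnd}(v)|\le n\text{ for all prefixes }v\text{ of }u\}$; $V_L(n)$ is the minimum over all such algorithms. $\mathsf{X}(\mathcal{O}(s))$ is the class of languages with an $\mathsf{X}$-model algorithm of space $\mathcal{O}(s(n))$. *)

From HB Require Import structures.
From mathcomp Require Import all_boot all_order all_algebra.
From mathcomp Require Import boolp reals.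
Set Implicit Arguments. Unset Strict Implicit. Unset Printing Implicit Defensive.
Import Order.TTheory GRing.Theory Num.Theory.

Section Mealy.
Variables (Sigma Gamma : finType) (Q : finType) (delta : Q -> Sigma -> Q * Gamma).

Fixpoint mtau (p : Q) (u : seq Sigma) : seq Gamma :=
  match u with
  | [::] => [::]
  | b :: u' => (delta p b).2 :: mtau (delta p b).1 u'
  end.

Definition ltransduce (q0 : Q) (x : seq Sigma) : seq Gamma :=
  rev (mtau q0 (rev x)).
End Mealy.

Definition lreduction (Sigma Gamma Q : finType) (q0 : Q)
  (delta : Q -> Sigma -> Q * Gamma) (K : seq Sigma -> Prop) (L : seq Gamma -> Prop) :=
  forall x : seq Sigma, K x <-> L (ltransduce delta q0 x).

Record DA (A : Type) := {
  st : Type;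
  init : st;
  step : st -> A -> st;
  final : st -> Prop;
  enc : st -> seq bool;
  enc_inj : injective enc }.

Definition run (A : Type) (M : DA A) (w : seq A) : st M := foldl (@step A M) (@init A M) w.
Definition accepts (A : Type) (M : DA A) (w : seq A) : Prop := final (run M w).

Definition last_n (A : Type) (pad : A) (n : nat) (w : seq A) : seq A :=
  if size w < n then nseq (n - size w) pad ++ w else drop (size w - n) w.

(* window of a variable-size stream; None plays the role of the symbol ↓ *)
Definition wstep (A : Type) (v : seq A) (a : option A) : seq A :=
  match a with Some b => rcons v b | None => behead v end.
Definition wnd (A : Type) (w : seq (option A)) : seq A := foldl (@wstep A) [::] w.

Lemma ex_asbool (P : nat -> Prop) : (exists k, P k) -> exists k, `[< P k >].
Proof. by case=> k Pk; exists k; apply/asboolP. Qed.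

(* minimum of {k | P k}, or infinity if empty *)
Definition inf_nat (P : nat -> Prop) : option nat :=
  match pselect (exists k, P k) with
  | left h => Some (ex_minn (ex_asbool h))
  | right _ => None
  end.

Definition le_ext (a b : option nat) : Prop :=
  match b, a with
  | None, _ => True
  | Some y, Some x => x <= y
  | Some _, None => False
  end.

Definition mul_ext (c : nat) (a : option nat) : option nat := omap (muln c) a.

Definition fixed_alg (Sigma : finType) (pad : Sigma) (L : seq Sigma -> Prop)
  (n : nat) (M : DA Sigma) : Prop :=
  forall w, accepts M w <-> L (last_n pad n w).

Definition fixed_space_le (Sigma : finType) (M : DA Sigma) (k : nat) : Prop :=
  forall q : st M, size (enc q) <= k.

Definition Fspace (Sigma : finType) (pad : Sigma) (L : seq Sigma -> Prop) (n : nat)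
  : option nat :=
  inf_nat (fun k => exists M, fixed_alg pad L n M /\ fixed_space_le M k).

Definition var_alg (Sigma : finType) (L : seq Sigma -> Prop) (M : DA (option Sigma))
  : Prop := forall w, accepts M w <-> L (wnd w).

Definition var_space_le (Sigma : finType) (M : DA (option Sigma)) (n k : nat) : Prop :=
  forall u u' : seq (option Sigma), prefix u' u ->
    (forall v, prefix v u -> size (wnd v) <= n) ->
    size (enc (run M u')) <= k.

Definition Vspace (Sigma : finType) (L : seq Sigma -> Prop) (n : nat) : option nat :=
  inf_nat (fun k => exists M, var_alg L M /\ var_space_le M n k).

Local Open Scope ring_scope.

Definition inFO (R : realType) (s : nat -> R) (Sigma : finType) (pad : Sigma)
  (L : seq Sigma -> Prop) : Prop :=
  exists Ms : nat -> DA Sigma,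
    (forall n, fixed_alg pad L n (Ms n)) /\
    exists c : R, 0 < c /\ exists n0 : nat, forall n : nat, (n0 <= n)%N ->
      forall q : st (Ms n), (size (enc q))%:R <= c * s n.

Definition inVO (R : realType) (s : nat -> R) (Sigma : finType)
  (L : seq Sigma -> Prop) : Prop :=
  exists M : DA (option Sigma), var_alg L M /\
    exists c : R, 0 < c /\ exists n0 : nat, forall n : nat, (n0 <= n)%N ->
      forall u u' : seq (option Sigma), prefix u' u ->
        (forall v, prefix v u -> (size (wnd v) <= n)%N) ->
        (size (enc (run M u')))%:R <= c * s n.

From HB Require Import structures.
From mathcomp Require Import all_boot all_order all_algebra.
From mathcomp Require Import boolp reals zify.
Set Implicit Arguments. Unset Strict Implicit. Unset Printing Implicit Defensive.
Import Order.TTheory GRing.Theory Num.Theory.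

(** The algorithm for [K] keeps, for every state [q] of the Mealy machine, the
    state reached by the algorithm for [L] on the transduction of the input
    started in [q]. Since a [<-]-transduction reads its input from right to
    left, after a letter [b] the copy for [q] continues the old copy for the
    target state of [delta q b], fed with the output letter of [delta q b]; and
    since the last [i] output letters only depend on the last [i] input
    letters, windows are transduced to windows. Writing the [|Q|] state
    encodings, each of length at most [k], in blocks of width [k + 1 <= 2k]
    costs [2 |Q| k] bits. For the classes [O(s)] no width is known in advance,
    and a self-delimiting code costs a constant factor [4 |Q| + 1] instead. *)

Section MealyTransduction.
Variables (Sigma Gamma Q : finType) (delta : Q -> Sigma -> Q * Gamma).

Definition mstate (q : Q) (u : seq Sigma) : Q := foldl (fun p b => (delta p b).1) q u.

Lemma mtau_cat q u v : mtau delta q (u ++ v) = mtau delta q u ++ mtau delta (mstate q u) v.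
Proof. by elim: u q => //= b u IH q; rewrite IH. Qed.

Lemma size_mtau q u : size (mtau delta q u) = size u.
Proof. by elim: u q => //= b u IH q; rewrite IH. Qed.

Lemma size_ltransduce q x : size (ltransduce delta q x) = size x.
Proof. by rewrite size_rev size_mtau size_rev. Qed.

Lemma ltransduce_cat q x y :
  ltransduce delta q (x ++ y) = ltransduce delta (mstate q (rev y)) x ++ ltransduce delta q y.
Proof. by rewrite /ltransduce rev_cat mtau_cat rev_cat. Qed.

Lemma ltransduce_rcons q x b :
  ltransduce delta q (rcons x b) = rcons (ltransduce delta (delta q b).1 x) (delta q b).2.
Proof. by rewrite /ltransduce rev_rcons /= rev_cons. Qed.

Lemma drop_ltransduce i q x : drop i (ltransduce delta q x) = ltransduce delta q (drop i x).
Proof.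
have [le_x_i | lt_i_x] := leqP (size x) i.
  by rewrite !drop_oversize ?size_ltransduce.
rewrite -{1}(cat_take_drop i x) ltransduce_cat drop_size_cat //.
by rewrite size_ltransduce size_take lt_i_x.
Qed.

Lemma take_ltransduce i q x :
  take i (ltransduce delta q x) = ltransduce delta (mstate q (rev (drop i x))) (take i x).
Proof.
have [le_x_i | lt_i_x] := leqP (size x) i.
  by rewrite !take_oversize ?drop_oversize ?size_ltransduce.
rewrite -{1}(cat_take_drop i x) ltransduce_cat take_size_cat //.
by rewrite size_ltransduce size_take lt_i_x.
Qed.

Lemma prefix_ltransduce q x v : prefix v (ltransduce delta q x) ->
  exists q' x', prefix x' x /\ v = ltransduce delta q' x'.
Proof.
rewrite prefixE => /eqP; move: (size v) => i <-.
by rewrite take_ltransduce; do 2!eexists; split; [exact: prefix_take | reflexivity].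
Qed.

Lemma ltransduce_last_n (padS : Sigma) (padG : Gamma) n q w :
  last_n padG n (ltransduce delta q (nseq n padS ++ w)) = ltransduce delta q (last_n padS n w).
Proof.
rewrite /last_n size_ltransduce size_cat size_nseq ltnNge leq_addr /= addKn.
rewrite drop_ltransduce drop_cat size_nseq; case: ltnP => // lt_w_n.
by rewrite drop_nseq.
Qed.

End MealyTransduction.

Definition optdelta (Sigma Gamma Q : finType) (delta : Q -> Sigma -> Q * Gamma)
  (q : Q) (x : option Sigma) : Q * option Gamma :=
  if x is Some b then ((delta q b).1, Some (delta q b).2) else (q, None).

Lemma wnd_rcons (A : Type) (u : seq (option A)) x : wnd (rcons u x) = wstep (wnd u) x.
Proof. by rewrite /wnd foldl_rcons. Qed.

Lemma wnd_ltransduce (Sigma Gamma Q : finType) (delta : Q -> Sigma -> Q * Gamma) q u :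
  wnd (ltransduce (optdelta delta) q u) = ltransduce delta q (wnd u).
Proof.
elim/last_ind: u q => [|u x IH] q //.
rewrite ltransduce_rcons !wnd_rcons; case: x => [b|] /=; rewrite IH //.
  by rewrite ltransduce_rcons.
by rewrite -!drop1 drop_ltransduce.
Qed.

Definition wnd_bounded (A : eqType) (n : nat) (u : seq (option A)) : Prop :=
  forall v, prefix v u -> size (wnd v) <= n.

Lemma wnd_bounded_prefix (A : eqType) n (u u' : seq (option A)) :
  prefix u' u -> wnd_bounded n u -> wnd_bounded n u'.
Proof. by move=> pu' bu v pv; apply/bu/(prefix_trans pv). Qed.

Lemma wnd_bounded_ltransduce (Sigma Gamma Q : finType) (delta : Q -> Sigma -> Q * Gamma) n q u :
  wnd_bounded n u -> wnd_bounded n (ltransduce (optdelta delta) q u).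
Proof.
move=> bu v /prefix_ltransduce [q' [u' [pu' ->]]].
by rewrite wnd_ltransduce size_ltransduce; apply: bu.
Qed.

Lemma var_space_leP (Sigma : finType) (M : DA (option Sigma)) n k :
  var_space_le M n k <-> forall u, wnd_bounded n u -> size (enc (run M u)) <= k.
Proof.
split=> [hM u bu | hM u u' pu' bu]; first exact: (hM u u (prefix_refl u)).
exact/hM/(wnd_bounded_prefix pu').
Qed.

Definition block (k : nat) (x : seq bool) : seq bool :=
  if k is 0 then [::] else nseq (k - size x) false ++ true :: x.

Definition selfdelim (x : seq bool) : seq bool :=
  flatten [seq [:: true; b] | b <- x] ++ [:: false].

Definition prefix_free (e : seq bool -> seq bool) (P : pred (seq bool)) : Prop :=
  forall x y s t, P x -> P y -> e x ++ s = e y ++ t -> x = y /\ s = t.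

Lemma size_block k x : size x <= k -> size (block k x) <= k.*2.
Proof. by case: k => //= k; rewrite size_cat size_nseq /=; lia. Qed.

Lemma block_prefix_free k : prefix_free (block k) (fun x => size x <= k).
Proof.
move=> x y s t /= sx sy; case: k sx sy => [|k] sx sy /eqP.
  by move: sx sy; rewrite !leqn0 !size_eq0 => /eqP -> /eqP -> /eqP /= ->.
rewrite eqseq_cat; last by rewrite !size_cat !size_nseq /=; lia.
case/andP=> /eqP + /eqP ->; rewrite /block.
by elim: (_ - _) (_ - _) => [|a IH] [|b] //= [] // /IH.
Qed.

Lemma size_selfdelim x : size (selfdelim x) = (size x).*2.+1.
Proof. by rewrite size_cat addn1; elim: x => //= b x ->; rewrite doubleS. Qed.

Lemma selfdelim_prefix_free : prefix_free selfdelim predT.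
Proof.
move=> x y s t _ _; rewrite /selfdelim -!catA.
by elim: x y => [|a x IH] [|b y] //= [] // -> /IH [-> ->].
Qed.

Lemma flatten_map_inj (e : seq bool -> seq bool) (P : pred (seq bool)) l1 l2 :
  prefix_free e P -> size l1 = size l2 -> all P l1 -> all P l2 ->
  flatten (map e l1) = flatten (map e l2) -> l1 = l2.
Proof.
move=> e_pf; elim: l1 l2 => [|x l1 IH] [|y l2] //= [] eq_sz /andP [Px Pl1] /andP [Py Pl2].
by case/e_pf=> // -> /IH ->.
Qed.

Lemma size_flatten_map_le (T : eqType) (e : T -> seq bool) m l :
  (forall x, x \in l -> size (e x) <= m) -> size (flatten (map e l)) <= m * size l.
Proof.
elim: l => //= x l IH le_e; rewrite size_cat mulnS leq_add ?le_e ?mem_head //.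
by apply: IH => y ly; rewrite le_e // in_cons ly orbT.
Qed.

(* Only lists of strings of length at most [k] matter for the space bound; the
   others still need an injective code, padded to be longer than any block code. *)
Definition code (k : nat) (l : seq (seq bool)) : seq bool :=
  if all (fun x => size x <= k) l then flatten (map (block k) l)
  else flatten (map selfdelim l) ++ nseq (size l * k.+1).+1 true.

Lemma size_code k l : all (fun x => size x <= k) l -> size (code k l) <= 2 * size l * k.
Proof.
move=> /allP short; rewrite /code (introT allP short) mulnAC mul2n.
by apply: size_flatten_map_le => x /short; apply: size_block.
Qed.

Lemma code_inj k l1 l2 : size l1 = size l2 -> code k l1 = code k l2 -> l1 = l2.
Proof.
have size_short l : all (fun x => size x <= k) l ->
    size (flatten (map (block k) l)) < (size l * k.+1).+1.
  move=> /allP short; rewrite ltnS mulnC; apply: size_flatten_map_le => x /short.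
  by rewrite /block; case: k {short} => //= k sx; rewrite size_cat size_nseq /=; lia.
move=> eq_sz; rewrite /code; case: ifP => short1; case: ifP => short2.
- exact: (flatten_map_inj (@block_prefix_free k) eq_sz short1 short2).
- by move=> e; have := size_short _ short1; rewrite e size_cat size_nseq eq_sz; lia.
- by move=> e; have := size_short _ short2; rewrite -e size_cat size_nseq eq_sz; lia.
- rewrite eq_sz => e.
  have eq_sz' : size (flatten (map selfdelim l1)) = size (flatten (map selfdelim l2)).
    by move/(congr1 size): e; rewrite !size_cat; lia.
  move/eqP: e; rewrite eqseq_cat // => /andP [/eqP e _].
  by apply: (flatten_map_inj selfdelim_prefix_free) => //; apply/allP.
Qed.

Lemma size_code0 l m : all (fun x => size x <= m) l -> size (code 0 l) <= (4 * size l + 1) * m.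
Proof.
move=> /allP short; rewrite /code; case: ifP => [_ | /allPn [x lx]].
  suff -> : flatten (map (block 0) l) = [::] by [].
  by clear short; elim: l.
rewrite -ltnNge => /leq_trans /(_ (short x lx)) m_gt0.
have : size (flatten (map selfdelim l)) <= m.*2.+1 * size l.
  by apply: size_flatten_map_le => y /short; rewrite size_selfdelim; lia.
rewrite size_cat size_nseq; nia.
Qed.

Section TransducedAutomaton.
Variables (B C Q : finType) (tau : Q -> C -> Q * B) (A : DA B) (s0 : Q -> seq B) (q0 : Q).

Lemma code_enc_inj k : injective (fun f : Q -> st A => code k [seq enc (f q) | q <- enum Q]).
Proof.
move=> f g /code_inj; rewrite !size_map => /(_ erefl) /eq_in_map eq_enc.
by apply: funext => q; apply: (@enc_inj _ A); apply: eq_enc; rewrite mem_enum.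
Qed.

Definition transducedDA (k : nat) : DA C := {|
  st := Q -> st A;
  init := fun q => run A (s0 q);
  step := fun f x q => step (f (tau q x).1) (tau q x).2;
  final := fun f => final (f q0);
  enc := fun f => code k [seq enc (f q) | q <- enum Q];
  enc_inj := @code_enc_inj k |}.

Lemma run_transducedDA k u q :
  run (transducedDA k) u q = run A (s0 (mstate tau q (rev u)) ++ ltransduce tau q u).
Proof.
elim/last_ind: u q => [|u x IH] q; first by rewrite cats0.
rewrite /run foldl_rcons -/(run _ u) /= IH rev_rcons ltransduce_rcons -rcons_cat.
by rewrite /run foldl_rcons.
Qed.

Lemma accepts_transducedDA k u :
  accepts (transducedDA k) u <-> accepts A (s0 (mstate tau q0 (rev u)) ++ ltransduce tau q0 u).
Proof. by rewrite /accepts /= run_transducedDA. Qed.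

Lemma size_enc_transducedDA k (f : Q -> st A) :
  (forall q, size (enc (f q)) <= k) -> size (@enc _ (transducedDA k) f) <= 2 * #|Q| * k.
Proof.
move=> short; rewrite cardT -(size_map (fun q => enc (f q))) size_code //.
by apply/allP=> _ /mapP [q _ ->].
Qed.

Lemma ler_size_enc_transducedDA0 (R : numDomainType) (f : Q -> st A) (r : R) :
  (forall q, (size (enc (f q)))%:R <= r)%R ->
  ((size (@enc _ (transducedDA 0) f))%:R <= (4 * #|Q| + 1)%:R * r)%R.
Proof.
move=> le_r; have Q_gt0 : 0 < #|Q| by apply/card_gt0P; exists q0.
have [q1 max_q1] := bigop.eq_bigmax (fun q => size (enc (f q))) Q_gt0.
have le_max : size (@enc _ (transducedDA 0) f) <= (4 * #|Q| + 1) * size (enc (f q1)).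
  rewrite cardT -(size_map (fun q => enc (f q))) size_code0 //.
  by apply/allP=> _ /mapP [q _ ->]; rewrite -max_q1 (leq_bigmax q).
apply: (le_trans (_ : _ <= ((4 * #|Q| + 1) * size (enc (f q1)))%N%:R)%R).
  by rewrite ler_nat.
by rewrite natrM ler_wpM2l.
Qed.

End TransducedAutomaton.

Lemma inf_nat_Some (P : nat -> Prop) k : inf_nat P = Some k -> P k.
Proof. by rewrite /inf_nat; case: pselect => // h [<-]; case: ex_minnP => m /asboolP. Qed.

Lemma inf_nat_le (P : nat -> Prop) j : P j -> exists2 k, inf_nat P = Some k & k <= j.
Proof.
move=> Pj; rewrite /inf_nat; case: pselect => [h | []]; last by exists j.
by case: ex_minnP => m _ min_m; exists m => //; apply/min_m/asboolP.
Qed.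

Lemma le_ext_inf_nat (P1 P2 : nat -> Prop) c :
  (forall k, P2 k -> P1 (c * k)) -> le_ext (inf_nat P1) (mul_ext c (inf_nat P2)).
Proof.
move=> P21; case E: (inf_nat P2) => [k|] //=.
by have [m -> le_m] := inf_nat_le (P21 _ (inf_nat_Some E)).
Qed.

Section Reduction.
Variables (Sigma Gamma Q : finType) (q0 : Q) (delta : Q -> Sigma -> Q * Gamma).
Variables (K : seq Sigma -> Prop) (L : seq Gamma -> Prop).
Hypothesis red : lreduction q0 delta K L.

Section FixedSize.
Variables (padS : Sigma) (padG : Gamma).

(* Prefixing the input with [n] padding symbols makes every transduced window
   full, so the padding symbol of [Gamma] never comes into play. *)
Definition fixedDA (A : DA Gamma) (n k : nat) : DA Sigma :=
  transducedDA delta A (fun q => ltransduce delta q (nseq n padS)) q0 k.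

Lemma fixed_alg_fixedDA A n k : fixed_alg padG L n A -> fixed_alg padS K n (fixedDA A n k).
Proof.
move=> algA w; rewrite accepts_transducedDA -ltransduce_cat algA.
by rewrite ltransduce_last_n red.
Qed.

Lemma fixed_space_le_fixedDA A n k :
  fixed_space_le A k -> fixed_space_le (fixedDA A n k) (2 * #|Q| * k).
Proof. by move=> spaceA f; apply: size_enc_transducedDA. Qed.

Lemma Fspace_lreduction n : le_ext (Fspace padS K n) (mul_ext (2 * #|Q|) (Fspace padG L n)).
Proof.
apply: le_ext_inf_nat => k [A [algA spaceA]]; exists (fixedDA A n k).
by split; [apply: fixed_alg_fixedDA | apply: fixed_space_le_fixedDA].
Qed.

Lemma inFO_lreduction (R : realType) (s : nat -> R) : inFO s padG L -> inFO s padS K.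
Proof.
case=> As [algAs [c [c_gt0 [n0 le_s]]]].
exists (fun n => fixedDA (As n) n 0); split=> [n | ]; first exact: fixed_alg_fixedDA.
exists ((4 * #|Q| + 1)%:R * c)%R; split; first by rewrite mulr_gt0 // ltr0n addn1.
exists n0 => n le_n0_n f; rewrite -mulrA.
by apply: ler_size_enc_transducedDA0 => q; apply: le_s.
Qed.

End FixedSize.

Definition varDA (A : DA (option Gamma)) (k : nat) : DA (option Sigma) :=
  transducedDA (optdelta delta) A (fun=> [::]) q0 k.

Lemma run_varDA A k u q : run (varDA A k) u q = run A (ltransduce (optdelta delta) q u).
Proof. by rewrite run_transducedDA. Qed.

Lemma var_alg_varDA A k : var_alg L A -> var_alg K (varDA A k).
Proof. by move=> algA u; rewrite accepts_transducedDA cat0s algA wnd_ltransduce red. Qed.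

Lemma var_space_le_varDA A n k :
  var_space_le A n k -> var_space_le (varDA A k) n (2 * #|Q| * k).
Proof.
rewrite !var_space_leP => spaceA u bu; apply: size_enc_transducedDA => q.
by rewrite run_varDA; apply/spaceA/wnd_bounded_ltransduce.
Qed.

Lemma Vspace_lreduction n : le_ext (Vspace K n) (mul_ext (2 * #|Q|) (Vspace L n)).
Proof.
apply: le_ext_inf_nat => k [A [algA spaceA]]; exists (varDA A k).
by split; [apply: var_alg_varDA | apply: var_space_le_varDA].
Qed.

Lemma inVO_lreduction (R : realType) (s : nat -> R) : inVO s L -> inVO s K.
Proof.
case=> A [algA [c [c_gt0 [n0 le_s]]]].
exists (varDA A 0); split; first exact: var_alg_varDA.
exists ((4 * #|Q| + 1)%:R * c)%R; split; first by rewrite mulr_gt0 // ltr0n addn1.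
exists n0 => n le_n0_n u u' pu' bu; rewrite -mulrA.
apply: ler_size_enc_transducedDA0 => q; rewrite run_varDA.
exact/(le_s n le_n0_n _ _ (prefix_refl _))/wnd_bounded_ltransduce/(wnd_bounded_prefix pu').
Qed.

End Reduction.

Theorem lemma3p3 (Sigma Gamma Q : finType) (q0 : Q) (delta : Q -> Sigma -> Q * Gamma)
  (K : seq Sigma -> Prop) (L : seq Gamma -> Prop) :
  lreduction q0 delta K L ->
  (* X = F *)
  (forall (padS : Sigma) (padG : Gamma) (n : nat),
     le_ext (Fspace padS K n) (mul_ext (2 * #|Q|) (Fspace padG L n))) /\
  (* X = V *)
  (forall n : nat, le_ext (Vspace K n) (mul_ext (2 * #|Q|) (Vspace L n))) /\
  (* closure of F(O(s)) and V(O(s)) under <- reductions *)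
  (forall (R : realType) (s : nat -> R) (padS : Sigma) (padG : Gamma),
     inFO s padG L -> inFO s padS K) /\
  (forall (R : realType) (s : nat -> R), inVO s L -> inVO s K).
Proof.
move=> red; split; first by move=> padS padG n; apply: Fspace_lreduction.
split; first by move=> n; apply: Vspace_lreduction.
split; first by move=> R s padS padG; apply: inFO_lreduction.
by move=> R s; apply: inVO_lreduction.
Qed.
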